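(* Let $n\ge2$ and $k\ge1$ be integers. Then $\mathcal{M}(n,k)\ge\binom{n+k-1}{k}$. Moreover, if a $(k,k)$-design $C\subset\mathbb{S}^{n-1}$ has exactly $\binom{n+k-1}{k}$ points, then for all distinct $x,y\in C$ the inner product $\langle x,y\rangle$ is a zero of $P_k^{(n+2)}(t)$.
   Context: For $m\ge 2$, let $P_i^{(m)}(t)$ be the normalized Gegenbauer polynomials: $P_0^{(m)}=1$, $P_1^{(m)}=t$, and $(i+m-2)P_{i+1}^{(m)}(t)=(2i+m-2)tP_i^{(m)}(t)-iP_{i-1}^{(m)}(t)$ for $i\ge1$. For a finite nonempty $C\subset\mathbb{S}^{n-1}$, its moments are $M_i(C)=\sum_{x,y\in C}P_i^{(n)}(\langle x,y\rangle)$. $C$ is a spherical $(k,k)$-design if $M_{2i}(C)=0$ for $i=1,\dots,k$. $\mathcal{M}(n,k)$ is the minimum cardinality of a $(k,k)$-design in $\mathbb{S}^{n-1}$. *)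

From HB Require Import structures.
From mathcomp Require Import all_boot all_order all_algebra.
From mathcomp Require Import reals.
Set Implicit Arguments. Unset Strict Implicit. Unset Printing Implicit Defensive.
Import Order.TTheory GRing.Theory Num.Theory.
Local Open Scope ring_scope.

Section Defs.
Variable R : realType.

(* gegen_pair m i = (P_i^(m), P_{i+1}^(m)) using
   (i+m-2) P_{i+1} = (2i+m-2) t P_i - i P_{i-1}  for i >= 1. *)
Fixpoint gegen_pair (m i : nat) : {poly R} * {poly R} :=
  match i with
  | 0 => (1, 'X)
  | j.+1 =>
      let pq := gegen_pair m j in
      (pq.2,
       (((j.+1 + m - 2)%N)%:R)^-1 *:
         (((2 * j.+1 + m - 2)%N)%:R *: ('X * pq.2) - (j.+1)%:R *: pq.1))
  end.

(* normalized Gegenbauer polynomial P_i^(m) *)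
Definition gegen (m i : nat) : {poly R} := (gegen_pair m i).1.

Definition dotv (n : nat) (x y : 'rV[R]_n) : R := \sum_(j < n) x 0 j * y 0 j.

Definition on_sphere (n : nat) (x : 'rV[R]_n) : Prop := dotv x x = 1.

Definition sph_code (n : nat) (C : seq 'rV[R]_n) : Prop :=
  [/\ uniq C, (0 < size C)%N & forall x, x \in C -> on_sphere x].

Definition moment (n : nat) (C : seq 'rV[R]_n) (i : nat) : R :=
  \sum_(x <- C) \sum_(y <- C) (gegen n i).[dotv x y].

Definition kk_design (n k : nat) (C : seq 'rV[R]_n) : Prop :=
  sph_code C /\ forall i, (1 <= i <= k)%N -> moment C (2 * i) = 0.

End Defs.

From HB Require Import structures.
From mathcomp Require Import all_boot all_order all_algebra.
From mathcomp Require Import reals.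
From mathcomp Require Import ring zify.
Set Implicit Arguments.
Unset Strict Implicit.
Unset Printing Implicit Defensive.
Import Order.TTheory GRing.Theory Num.Theory.
Local Open Scope ring_scope.

(* Delsarte's linear programming bound. Let [P i] be the Gegenbauer polynomials
   of dimension [n], [L] the linear form taking the [P 0]-coordinate in the basis
   [(P i)], [h i] the dimension of the spherical harmonics of degree [i], and
   [K] the sum of the [h i *: P i] over the [i <= k] of the parity of [k]. The
   three-term recurrence alone shows that the [P i] are [L]-orthogonal with
   [L (P i ^+ 2) = 1 / h i], hence [L (K ^+ 2) = K.[1]], and that [K] is
   [D = 'C(n + k - 1, k)] times the Gegenbauer polynomial of degree [k] in
   dimension [n + 2]. For a (k,k)-design [C], the moment conditions say that the
   sum of [p.[<x, y>]] over [x, y \in C] is [|C|^2 * L p] for every even [p] of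
   degree at most [2 k]. For [p = K ^+ 2] this is [|C|^2 * D], while the diagonal
   [x = y] alone contributes [|C| * D^2]: so [D <= |C|], and if [D = |C|] every
   off-diagonal term [K.[<x, y>] ^+ 2] vanishes. *)

Lemma nat_ind2 (Q : nat -> Prop) :
  Q 0%N -> Q 1%N -> (forall j, Q j -> Q j.+1 -> Q j.+2) -> forall j, Q j.
Proof.
move=> Q0 Q1 QSS j; suff : Q j /\ Q j.+1 by case.
by elim: j => [|j [Qj QSj]]; split=> //; apply: QSS.
Qed.

(* The parameter [m >= 2] of [gegen R m] is written [u.+2]: the recurrence
   coefficients [i + m - 2] and [2 i + m - 2] then become [i + u], [2 i + u]. *)
Section Gegenbauer.
Variables (R : realType) (u : nat).
Local Notation P := (gegen R u.+2).

Lemma gegenSS j : P j.+2 =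
  (j.+1 + u)%:R^-1 *: ((2 * j.+1 + u)%:R *: ('X * P j.+1) - j.+1%:R *: P j).
Proof.
have -> : (j.+1 + u = j.+1 + u.+2 - 2)%N by lia.
by have -> : (2 * j.+1 + u = 2 * j.+1 + u.+2 - 2)%N by lia.
Qed.

Lemma gegen_rec j : (j.+1 + u)%:R *: P j.+2 =
  (2 * j.+1 + u)%:R *: ('X * P j.+1) - j.+1%:R *: P j.
Proof. by rewrite gegenSS scalerA mulfV ?scale1r // pnatr_eq0 addSn. Qed.

Lemma mulX_gegen j :
  (2 * j + u)%:R *: ('X * P j) = (j + u)%:R *: P j.+1 + j%:R *: P j.-1.
Proof.
case: j => [|j]; first by rewrite scale0r addr0 muln0 add0n mulr1.
by rewrite gegen_rec subrK.
Qed.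

Let coef_gegenSS j i : (P j.+2)`_i = (j.+1 + u)%:R^-1 *
  ((2 * j.+1 + u)%:R * (if i == 0%N then 0 else (P j.+1)`_i.-1) - j.+1%:R * (P j)`_i).
Proof. by rewrite gegenSS coefZ coefB !coefZ coefXM. Qed.

Lemma coef_gegen_odd j i : odd (i + j) -> (P j)`_i = 0.
Proof.
elim/nat_ind2: j i => [i|i|j IHj IHSj i ij_odd].
- by rewrite addn0 coefC; case: i.
- by rewrite coefX; case: i => [|[|i]].
rewrite coef_gegenSS IHj; last by move: ij_odd; rewrite !addnS /= negbK.
case: i ij_odd => [|i] ij_odd /=; first by rewrite !(mulr0, subr0).
by rewrite IHSj ?(mulr0, subr0) //; move: ij_odd; rewrite !addSn !addnS /= negbK.
Qed.

Lemma coef_gegen_gt j i : (j < i)%N -> (P j)`_i = 0.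
Proof.
elim/nat_ind2: j i => [i|i|j IHj IHSj i lt_ji].
- by rewrite coefC; case: i.
- by rewrite coefX; case: i => [|[|i]].
rewrite coef_gegenSS IHj; last by lia.
by case: i lt_ji => [|i] lt_ji /=; rewrite ?IHSj ?(mulr0, subr0).
Qed.

Lemma coef_gegen_diag_gt0 j : 0 < (P j)`_j.
Proof.
elim/nat_ind2: j => [||j IHj IHSj]; [by rewrite coefC | by rewrite coefX |].
rewrite coef_gegenSS /= (@coef_gegen_gt j j.+2) // mulr0 subr0.
by rewrite mulr_gt0 ?invr_gt0 ?ltr0n ?addSn // mulr_gt0 // ltr0n; lia.
Qed.

Lemma size_gegen j : size (P j) = j.+1.
Proof.
apply/eqP; rewrite eqn_leq; apply/andP; split; first exact/leq_sizeP/coef_gegen_gt.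
rewrite ltnNge; apply/negP => /leq_sizeP/(_ j (leqnn j)) Pjj.
by have := coef_gegen_diag_gt0 j; rewrite Pjj ltxx.
Qed.

Lemma lead_coef_gegen j : lead_coef (P j) = (P j)`_j.
Proof. by rewrite lead_coefE size_gegen. Qed.

Lemma horner_gegen1 j : (P j).[1] = 1.
Proof.
elim/nat_ind2: j => [||j IHj IHSj]; [by rewrite hornerC | by rewrite hornerX |].
rewrite gegenSS hornerZ hornerD hornerN !hornerZ -commr_polyX hornerMX IHj IHSj !mulr1.
have -> : (2 * j.+1 + u = (j.+1 + u) + j.+1)%N by lia.
by rewrite [X in X - _]natrD addrK mulVf // pnatr_eq0 addSn.
Qed.

End Gegenbauer.

Section GegenbauerMean.
Variables (R : realType) (u : nat).
Local Notation P := (gegen R u.+2).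

(* The [P 0]-coordinate of [p] in the basis [P 0, ..., P d]. *)
Fixpoint gegen_coord0 (d : nat) (p : {poly R}) : R :=
  if d is d'.+1 then gegen_coord0 d' (p - (p`_d / lead_coef (P d)) *: P d)
  else p`_0.

Lemma gegen_coord0_lin d a p q :
  gegen_coord0 d (a *: p + q) = a * gegen_coord0 d p + gegen_coord0 d q.
Proof.
elim: d p q => [|d IHd] p q /=; first by rewrite coefD coefZ.
rewrite -IHd coefD coefZ; congr (gegen_coord0 d _).
by rewrite -!mul_polyC; ring.
Qed.

Lemma gegen_coord0S d (p : {poly R}) :
  (size p <= d.+1)%N -> gegen_coord0 d.+1 p = gegen_coord0 d p.
Proof. by move=> /leq_sizeP p_small /=; rewrite p_small // mul0r scale0r subr0. Qed.

Lemma gegen_coord0_gegen d j : (j <= d)%N -> gegen_coord0 d (P j) = (j == 0%N)%:R.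
Proof.
elim: d j => [|d IHd] j le_jd; first by case: j le_jd => // _ /=; rewrite coef1.
case: (ltngtP j d.+1) le_jd => // [lt_jd|->] _.
  by rewrite gegen_coord0S ?size_gegen ?IHd.
rewrite /= lead_coef_gegen divff ?scale1r ?subrr; last exact/lt0r_neq0/coef_gegen_diag_gt0.
by elim: d {IHd} => [|d IHd] /=; rewrite ?coef0 ?mul0r ?scale0r ?subr0.
Qed.

(* For the uniform measure on [S^(u+1)], [gegen_mean p] is the mean of
   [p.[<x, e>]]; here it is defined algebraically, and its orthogonality
   properties are derived from the recurrence alone. *)
Definition gegen_mean (p : {poly R}) : R := gegen_coord0 (size p) p.

Lemma gegen_meanE d (p : {poly R}) :
  (size p <= d.+1)%N -> gegen_mean p = gegen_coord0 d p.
Proof.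
have stable e (q : {poly R}) : (size q <= e.+1)%N -> (e <= maxn d (size p))%N ->
    gegen_coord0 (maxn d (size p)) q = gegen_coord0 e q.
  move=> small_q /subnK <-; elim: (_ - e)%N => // i IHi.
  by rewrite addSn gegen_coord0S // (leq_trans small_q) // ltnS leq_addl.
by move=> small_p; rewrite /gegen_mean -(stable (size p)) ?leq_maxr // (stable d) ?leq_maxl.
Qed.

Fact gegen_mean_is_scalar : scalar gegen_mean.
Proof.
move=> a p q; set d := maxn (size p) (size q).
have small_p : (size p <= d.+1)%N by rewrite ltnW // ltnS leq_maxl.
have small_q : (size q <= d.+1)%N by rewrite ltnW // ltnS leq_maxr.
have small_apq : (size (a *: p + q)%R <= d.+1)%N.
  by rewrite (leq_trans (size_polyD _ _)) // geq_max small_q (leq_trans (size_scale_leq a p)).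
by rewrite !(gegen_meanE small_p, gegen_meanE small_q, gegen_meanE small_apq) gegen_coord0_lin.
Qed.

HB.instance Definition _ :=
  GRing.isLinear.Build R {poly R} R *%R gegen_mean gegen_mean_is_scalar.

Lemma gegen_mean_gegen j : gegen_mean (P j) = (j == 0%N)%:R.
Proof. by rewrite (@gegen_meanE j) ?size_gegen // gegen_coord0_gegen. Qed.

End GegenbauerMean.

(* [hom_dim u j] is the dimension of the forms of degree [j] in [u.+1] variables,
   [harm_dim u j] that of the spherical harmonics of degree [j] on [S^(u+1)]. *)
Section Dimensions.
Variables (R : realType) (u : nat).

Definition hom_dim (j : nat) : R := 'C(u + j, j)%:R.

Definition harm_dim (j : nat) : R :=
  if j is i.+1 then hom_dim j + hom_dim i else 1.

Lemma hom_dim0 : hom_dim 0 = 1.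
Proof. by rewrite /hom_dim bin0. Qed.

Lemma hom_dim_gt0 j : 0 < hom_dim j.
Proof. by rewrite ltr0n bin_gt0 leq_addl. Qed.

Lemma hom_dimS j : hom_dim j.+1 = hom_dim j * (u + j.+1)%:R / j.+1%:R.
Proof.
apply: (mulIf (_ : j.+1%:R != 0 :> R)); first by rewrite pnatr_eq0.
rewrite divfK ?pnatr_eq0 // /hom_dim -!natrM addnS; congr _%:R.
by have := mul_bin_diag (u + j).+1 j; rewrite /=; lia.
Qed.

Lemma harm_dimS j : harm_dim j.+1 = hom_dim j * (2 * j.+1 + u)%:R / j.+1%:R.
Proof.
have -> : (2 * j.+1 + u = (u + j.+1) + j.+1)%N by lia.
by rewrite /= hom_dimS natrD; field; rewrite ?natr1 ?nat1r pnatr_eq0.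
Qed.

Lemma harm_dim_ratio j :
  j.+2%:R * (2 * j.+1 + u)%:R * harm_dim j.+2 =
  (j.+1 + u)%:R * (2 * j.+2 + u)%:R * harm_dim j.+1.
Proof.
rewrite !harm_dimS hom_dimS addnC.
by field; rewrite nat1r -natrD !pnatr_eq0.
Qed.

End Dimensions.

Section GegenbauerOrthogonality.
Variables (R : realType) (u : nat).
Local Notation P := (gegen R u.+2).
Local Notation L := (@gegen_mean R u).

Let mean_mulX i j : (2 * j + u)%:R * L (P i * ('X * P j)) =
  (j + u)%:R * L (P i * P j.+1) + j%:R * L (P i * P j.-1).
Proof. by rewrite -linearZ /= scalerAr mulX_gegen mulrDr linearD -!scalerAr !linearZ. Qed.

Lemma gegen_mean_orth i j : (i < j)%N -> L (P i * P j) = 0.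
Proof.
have mulX_orth i' j' : (forall l, (i' < l)%N -> L (P i' * P l) = 0) ->
    (i'.+1 < j')%N -> L (P i' * ('X * P j')) = 0.
  move=> orth_i' lt_ij'; apply: (mulfI (_ : (2 * j' + u)%:R != 0)).
    by rewrite pnatr_eq0; lia.
  by rewrite mean_mulX !orth_i' ?mulr0 ?addr0 //; lia.
have orth0 l : (0 < l)%N -> L (P 0 * P l) = 0.
  by rewrite mul1r gegen_mean_gegen; case: l.
elim/nat_ind2: i j => [//|j lt_1j|i orth_i orth_Si j lt_ij].
  by rewrite (_ : P 1 * P j = P 0 * ('X * P j)) ?mulX_orth // mul1r.
apply: (mulfI (_ : (i.+1 + u)%:R != 0)); first by rewrite pnatr_eq0.
rewrite mulr0 -linearZ /= scalerAl gegen_rec mulrBl -!scalerAl linearB !linearZ /=.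
by rewrite -mulrA mulrCA orth_i ?mulX_orth ?mulr0 ?subr0 //; lia.
Qed.

Lemma gegen_mean_sqr1 : u.+2%:R * L (P 1 * P 1) = 1.
Proof.
have := mean_mulX 0 1; rewrite [P 0 * _]mul1r => ->.
by rewrite gegen_mean_orth // mulr0 add0r mul1r mulr1 gegen_mean_gegen.
Qed.

Lemma gegen_mean_sqrS j :
  (j.+1 + u)%:R * (2 * j.+2 + u)%:R * L (P j.+2 * P j.+2) =
  j.+2%:R * (2 * j.+1 + u)%:R * L (P j.+1 * P j.+1).
Proof.
have := mean_mulX j.+1 j.+2; rewrite (@gegen_mean_orth j.+1 j.+3) // mulr0 add0r => eqS.
have := mean_mulX j.+2 j.+1.
rewrite /= [P j.+2 * P j]mulrC (@gegen_mean_orth j j.+2) // mulr0 addr0.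
rewrite mulrCA [P j.+2 * P j.+1]mulrC -mulrCA => eqSS.
by rewrite mulrAC -eqSS mulrAC -mulrA eqS mulrA [_ * j.+2%:R]mulrC.
Qed.

Lemma harm_dim_mean_sqr j : harm_dim R u j * L (P j * P j) = 1.
Proof.
elim/nat_ind2: j => [||j _ IHj].
- by rewrite mul1r mul1r gegen_mean_gegen.
- by rewrite /harm_dim /hom_dim bin0 bin1 addn1 natr1 gegen_mean_sqr1.
have c_neq0 : (j.+1 + u)%:R * (2 * j.+2 + u)%:R != 0 :> R.
  by rewrite mulf_neq0 // pnatr_eq0 addSn.
apply: (mulfI c_neq0); rewrite mulr1 mulrCA gegen_mean_sqrS mulrA [_ * (_ * _)]mulrC.
by rewrite harm_dim_ratio -[_ * harm_dim R u j.+1 * _]mulrA IHj mulr1.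
Qed.

End GegenbauerOrthogonality.

Section GegenbauerKernel.
Variables (R : realType) (u : nat).
Local Notation P := (gegen R u.+2).
Local Notation Q := (gegen R u.+4).
Local Notation c := (hom_dim R u).
Local Notation h := (harm_dim R u).

(* The zonal reproducing kernel of the polynomials of degree at most [j] having
   the parity of [j]. *)
Fixpoint gegen_kernel (j : nat) : {poly R} :=
  match j with
  | 0 => 1
  | 1 => h 1 *: P 1
  | i.+2 => gegen_kernel i + h i.+2 *: P i.+2
  end.

Local Notation K := gegen_kernel.

Lemma harm_dim_mulX_gegen i : h i.+1 *: ('X * P i.+1) = c i *: P i + c i.+1 *: P i.+2.
Proof.
rewrite harm_dimS mulrAC -scalerA mulX_gegen hom_dimS /=.
move: (P i) (P i.+2) => p q; rewrite scalerDr !scalerA addrC.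
by congr (_ *: _ + _ *: _); field; rewrite nat1r pnatr_eq0.
Qed.

Lemma mulX_gegen_kernel j : 'X * K j.+1 = K j + c j.+1 *: P j.+2.
Proof.
elim/nat_ind2: j => [||j IHj _].
- by rewrite /= -scalerAr harm_dim_mulX_gegen hom_dim0 scale1r.
- rewrite /= mulrDr mulr1 -scalerAr harm_dim_mulX_gegen.
  by rewrite hom_dim0 scalerDl scale1r addrA (addrC 'X).
rewrite [K j.+3]/= mulrDr IHj -scalerAr harm_dim_mulX_gegen [K j.+2]/=.
by rewrite scalerDl !addrA (addrAC (K j)).
Qed.

Lemma gegen_kernel_rec j :
  c j.+1 *: K j.+2 = h j.+2 *: ('X * K j.+1) - c j.+2 *: K j.
Proof.
rewrite mulX_gegen_kernel [K j.+2]/= [h j.+2]/=; move: (K j) (P j.+2) => k p.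
by apply/polyP => i; rewrite !(coefD, coefN, coefZ); ring.
Qed.

(* Both sides satisfy the same three-term recurrence. *)
Lemma gegen_kernelE j : K j = hom_dim R u.+1 j *: Q j.
Proof.
elim/nat_ind2: j => [|/=|j IHj IHSj].
- by rewrite /hom_dim bin0 scale1r.
- by rewrite /hom_dim bin0 !bin1 !addn1 natr1.
have E1 := gegen_kernel_rec j; rewrite IHj IHSj -scalerAr !scalerA in E1.
have E2 := gegen_rec R u.+2 j.
have a_neq0 : (j.+1 + u.+2)%:R * c j.+1 != 0.
  by rewrite mulf_neq0 ?(lt0r_neq0 (hom_dim_gt0 R u j.+1)) // pnatr_eq0 addSn.
move: (K j.+2) (Q j.+2) E1 E2 => k q E1 E2; apply: (scalerI a_neq0).
rewrite -scalerA E1 scalerA -mulrA [(j.+1 + u.+2)%:R * _]mulrC -[RHS]scalerA E2.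
rewrite !scalerBr !scalerA; congr (_ *: _ - _ *: _); rewrite ?harm_dimS !hom_dimS.
all: by field; rewrite nat1r -natrD !pnatr_eq0.
Qed.

Lemma horner_gegen_kernel1 j : (K j).[1] = hom_dim R u.+1 j.
Proof. by rewrite gegen_kernelE hornerZ horner_gegen1 mulr1. Qed.

Lemma coef_gegen_kernel_odd j i : odd (i + j) -> (K j)`_i = 0.
Proof. by move=> ij_odd; rewrite gegen_kernelE coefZ coef_gegen_odd ?mulr0. Qed.

Lemma size_gegen_kernel j : (size (K j) <= j.+1)%N.
Proof. by rewrite gegen_kernelE (leq_trans (size_scale_leq _ _)) ?size_gegen. Qed.

Local Notation L := (@gegen_mean R u).

Lemma gegen_mean_kernel_orth j i : (j < i)%N -> L (K j * P i) = 0.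
Proof.
elim/nat_ind2: j i => [i|i|j IHj _ i lt_ji].
- by rewrite [K 0]/= mul1r gegen_mean_gegen; case: i.
- by move=> lt_1i; rewrite -scalerAl linearZ /= gegen_mean_orth ?mulr0.
rewrite [K _]/= mulrDl -scalerAl linearD linearZ /= IHj; last by lia.
by rewrite gegen_mean_orth ?mulr0 ?addr0 //; lia.
Qed.

Lemma gegen_mean_kernel_sqr j : L (K j * K j) = (K j).[1].
Proof.
elim/nat_ind2: j => [||j IHj _].
- by rewrite [K 0]/= mul1r (gegen_mean_gegen R u 0) (horner_gegen1 R u 0).
- rewrite -scalerAl -scalerAr !linearZ /= (harm_dim_mean_sqr R u 1).
  by rewrite mulr1 hornerZ horner_gegen1 mulr1.
have KP0 : L (K j * P j.+2) = 0 by apply: gegen_mean_kernel_orth.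
have PP1 := harm_dim_mean_sqr R u j.+2.
have P1 := horner_gegen1 R u j.+2.
rewrite [K j.+2]/=; move: (P j.+2) KP0 PP1 P1 => p KP0 PP1 P1.
rewrite mulrDl !mulrDr -!scalerAl -!scalerAr !linearD !linearZ /= IHj.
by rewrite [p * K j]mulrC KP0 PP1 hornerD hornerZ P1 !mulr0 !mulr1 addr0 add0r.
Qed.

End GegenbauerKernel.

Lemma coef_mul_odd (R : nzSemiRingType) (p q : {poly R}) a b i :
  (forall j, odd (j + a) -> p`_j = 0) -> (forall j, odd (j + b) -> q`_j = 0) ->
  odd (i + a + b) -> (p * q)`_i = 0.
Proof.
move=> p_odd q_odd iab_odd; rewrite coefM big1 // => j _.
have [ja_odd|ja_even] := boolP (odd (j + a)); first by rewrite p_odd ?mul0r.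
by rewrite q_odd ?mulr0 //; have := ltn_ord j; lia.
Qed.

Lemma sumr_const_seq (V : nmodType) (T : Type) (s : seq T) (x : V) :
  \sum_(i <- s) x = x *+ size s.
Proof. by rewrite big_const_seq count_predT iter_addr addr0. Qed.

Lemma big_pair_diag (V : nmodType) (T : eqType) (s : seq T) (F : T -> T -> V) :
  uniq s -> \sum_(x <- s) \sum_(y <- s) F x y =
    \sum_(x <- s) F x x + \sum_(x <- s) \sum_(y <- s | y != x) F x y.
Proof.
by move=> s_uniq; rewrite -big_split; apply: eq_big_seq => x xs; rewrite (bigD1_seq x).
Qed.

Section ScalarOnEvenPolynomials.
Variables (R : realType) (u k : nat) (phi : {scalar {poly R}}).
Local Notation P := (gegen R u.+2).
Local Notation L := (@gegen_mean R u).
Hypothesis phi_gegen : forall i, (1 <= i <= k)%N -> phi (P (2 * i)) = 0.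

Lemma scalar_eq_gegen_mean (p : {poly R}) : (size p <= (2 * k).+1)%N ->
  (forall i, odd i -> p`_i = 0) -> phi p = phi 1 * L p.
Proof.
suff: forall d, (d <= 2 * k)%N -> (size p <= d.+1)%N ->
    (forall i, odd i -> p`_i = 0) -> phi p = phi 1 * L p by apply.
move=> d; elim: d p => [|d IHd] p le_d2k small_p p_even.
  rewrite (size1_polyC small_p) -alg_polyC !linearZ /= (gegen_mean_gegen R u 0).
  by rewrite eqxx mulr1n mulr1 mulrC.
have [d_odd|d_even] := boolP (odd d.+1).
  apply: IHd; [exact: ltnW le_d2k | | exact: p_even].
  apply/leq_sizeP => i; rewrite leq_eqVlt => /orP [/eqP <-|]; first exact: p_even.
  exact: (leq_sizeP _ _ small_p).
set c := p`_d.+1 / lead_coef (P d.+1).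
have phi_P : phi (P d.+1) = 0.
  by rewrite -[d.+1]odd_double_half (negbTE d_even) add0n -mul2n phi_gegen //; lia.
have small_q : (size (p - c *: P d.+1)%R <= d.+1)%N.
  apply/leq_sizeP => i; rewrite coefB coefZ leq_eqVlt => /orP [/eqP <-|lt_di].
    by rewrite /c lead_coef_gegen divfK ?subrr // lt0r_neq0 ?coef_gegen_diag_gt0.
  by rewrite (leq_sizeP _ _ small_p) // coef_gegen_gt // mulr0 subr0.
have q_even i : odd i -> (p - c *: P d.+1)`_i = 0.
  by move=> i_odd; rewrite coefB coefZ p_even // coef_gegen_odd ?mulr0 ?subr0 // oddD i_odd.
move: (IHd _ (ltnW le_d2k) small_q q_even).
by rewrite !linearB !linearZ /= phi_P gegen_mean_gegen mulr0 !subr0.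
Qed.

End ScalarOnEvenPolynomials.

Section PairSum.
Variables (R : realType) (n : nat) (C : seq 'rV[R]_n).

Definition pair_sum (p : {poly R}) : R := \sum_(x <- C) \sum_(y <- C) p.[dotv x y].

Fact pair_sum_is_scalar : scalar pair_sum.
Proof.
move=> a p q; rewrite /pair_sum mulr_sumr -big_split; apply: eq_bigr => x _.
by rewrite mulr_sumr -big_split; apply: eq_bigr => y _; rewrite hornerD hornerZ.
Qed.

HB.instance Definition _ :=
  GRing.isLinear.Build R {poly R} R *%R pair_sum pair_sum_is_scalar.

Lemma pair_sum1 : pair_sum 1 = (size C)%:R ^+ 2.
Proof.
rewrite /pair_sum -polyC1; under eq_bigr do under eq_bigr do rewrite hornerC.
by rewrite !sumr_const_seq expr2 mulr_natr.
Qed.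

End PairSum.

Section DesignBound.
Variables (R : realType) (u k : nat) (C : seq 'rV[R]_u.+2).
Hypothesis C_design : kk_design k C.
Local Notation K := (gegen_kernel R u k).
Local Notation N := ((size C)%:R : R).
Local Notation D := (hom_dim R u.+1 k).

Lemma pair_sum_kernel_sqr : pair_sum C (K * K) = N ^+ 2 * D.
Proof.
have [_ C_moments] := C_design.
rewrite (@scalar_eq_gegen_mean R u k (pair_sum C) C_moments) /=.
- by rewrite pair_sum1 gegen_mean_kernel_sqr horner_gegen_kernel1.
- rewrite (leq_trans (size_polyMleq _ _)) //.
  by have := size_gegen_kernel R u k; lia.
- move=> i i_odd; have K_odd := @coef_gegen_kernel_odd R u k.
  by apply: (coef_mul_odd K_odd K_odd); rewrite -addnA addnn oddD odd_double addbF.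
Qed.

Lemma kernel_sqr_offdiag :
  \sum_(x <- C) \sum_(y <- C | y != x) K.[dotv x y] ^+ 2 = N * D * (N - D).
Proof.
have [[C_uniq C_gt0 C_sphere] _] := C_design.
have := pair_sum_kernel_sqr; rewrite /pair_sum.
under eq_bigr do under eq_bigr do rewrite hornerM -expr2.
rewrite big_pair_diag // (eq_big_seq (fun _ => D ^+ 2)) => [|x /C_sphere ->]; last first.
  by rewrite horner_gegen_kernel1.
rewrite sumr_const_seq => /(congr1 (fun s => s - D ^+ 2 *+ size C)).
by rewrite addrC addKr => ->; rewrite -mulr_natr; ring.
Qed.

Lemma hom_dim_le_size : D <= N.
Proof.
have [[_ C_gt0 _] _] := C_design.
have : 0 <= N * D * (N - D).
  by rewrite -kernel_sqr_offdiag; do 2!(apply: sumr_ge0 => ? _); apply: sqr_ge0.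
by rewrite pmulr_rge0 ?subr_ge0 // mulr_gt0 ?hom_dim_gt0 ?ltr0n.
Qed.

Lemma tight_design_gegen_root x y : N = D -> x \in C -> y \in C -> x != y ->
  root (gegen R u.+4 k) (dotv x y).
Proof.
move=> tight xC yC neq_xy.
have := kernel_sqr_offdiag; rewrite tight subrr mulr0 => /eqP.
rewrite psumr_eq0 => [/allP/(_ x xC)|]; last first.
  by move=> ? _; apply: sumr_ge0 => ? _; apply: sqr_ge0.
rewrite psumr_eq0 => [/allP/(_ y yC)|]; last by move=> ? _; apply: sqr_ge0.
rewrite eq_sym neq_xy sqrf_eq0 gegen_kernelE hornerZ mulf_eq0 /=.
by rewrite (negbTE (lt0r_neq0 (hom_dim_gt0 R u.+1 k))).
Qed.

End DesignBound.

Theorem mainTheorem3 (R : realType) (n k : nat) :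
  (2 <= n)%N -> (1 <= k)%N ->
  (forall C : seq 'rV[R]_n, kk_design k C -> ('C(n + k - 1, k) <= size C)%N) /\
  (forall C : seq 'rV[R]_n, kk_design k C -> size C = 'C(n + k - 1, k) ->
     forall x y, x \in C -> y \in C -> x != y ->
       root (gegen R (n + 2) k) (dotv x y)).
Proof.
move=> n_ge2 _; have [u ->] : exists u, n = u.+2 by exists (n - 2)%N; lia.
have -> : (u.+2 + k - 1 = u.+1 + k)%N by lia.
split=> [C C_design | C C_design size_C x y].
  by rewrite -(ler_nat R) -/(hom_dim R u.+1 k) hom_dim_le_size.
by rewrite addn2; apply: tight_design_gegen_root; rewrite // size_C.
Qed.
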